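(* Let $t\ge 2$ and $k\ge 2$ be integers. Then there is a constant $c_{t,k}>0$ depending only on $t$ and $k$ such that for all sufficiently large $n$, \[ \operatorname{br}_k(C_{2t};K_{n,n}) \le \frac{c_{t,k}\, n^2}{\log^2 n}. \]
   Context: $C_{2t}$ denotes the cycle of length $2t$ and $K_{n,n}$ the complete bipartite graph with both parts of size $n$. For bipartite graphs $G_1,G_2$ and an integer $k\ge1$, the multicolor bipartite Ramsey number $\operatorname{br}_k(G_1;G_2)$ is the least integer $N$ such that every coloring of the edges of $K_{N,N}$ with $k+1$ colors $1,\dots,k+1$ contains a monochromatic copy of $G_1$ in one of the colors $1,\dots,k$ or a monochromatic copy of $G_2$ in color $k+1$. Rounding is ignored. *)

From HB Require Import structures.
From mathcomp Require Import all_boot all_order all_algebra.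
Set Implicit Arguments. Unset Strict Implicit. Unset Printing Implicit Defensive.

(* An edge colouring of K_{N,N} with k+1 colours: left vertex i, right vertex j,
   colour c i j : 'I_k.+1.  Colour 1..k of the paper = values 0..k-1,
   colour k+1 of the paper = value k (ord_max). *)
Definition bcoloring (N k : nat) := 'I_N -> 'I_N -> 'I_k.+1.

Definition mono_cycle (N k t : nat) (c : bcoloring N k) (a : 'I_k.+1) : Prop :=
  exists (x y : 'I_t -> 'I_N), injective x /\ injective y /\
    forall i : 'I_t, c (x i) (y i) = a /\ c (x (ordS i)) (y i) = a.

Definition mono_Knn (N k n : nat) (c : bcoloring N k) (a : 'I_k.+1) : Prop :=
  exists (A B : {set 'I_N}), #|A| = n /\ #|B| = n /\
    forall x y, x \in A -> y \in B -> c x y = a.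

Definition br_arrows (k t n N : nat) : Prop :=
  forall c : bcoloring N k,
    (exists a : 'I_k.+1, (val a < k)%N /\ mono_cycle t c a)
    \/ mono_Knn n c ord_max.

(* br_k(C_{2t}; K_{n,n}) <= x  iff some N <= x satisfies br_arrows
   (br is the least such N). *)

(* Take N = s^2.  If a colour a among the first k has no C_{2t}, then for every
   left vertex x the bipartite graph between the a-neighbours of x and the whole
   left side has no subgraph of minimum degree > t: a greedy walk in such a
   subgraph, started at x, closes a C_{2t} through x.  So it has at most
   t (deg x + N) edges; summing over x bounds the number of a-paths of length
   two, and Cauchy-Schwarz gives |colour a| <= 2 t s^3.  The last colour thus
   misses at most 2 k t s^3 edges, and the Kovari-Sos-Turan double count of
   n-sets lying in common neighbourhoods produces a K_{n,n} as soon as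
   (1 - g s / (s^2 - n))^n >= 2 n / s^2 with g = 4 k t, which holds for
   s ~ 16 g n / ln n. *)

From Pilot Require Import Defs.
From HB Require Import structures.
From mathcomp Require Import all_boot all_order all_algebra.
From mathcomp Require Import reals sequences exp.
From mathcomp Require Import ring lra zify.
Import Order.TTheory GRing.Theory Num.Theory.
Import Defs.
Set Implicit Arguments. Unset Strict Implicit. Unset Printing Implicit Defensive.

Lemma card_set_sum (T : finType) (P : pred T) : #|[set x | P x]| = \sum_x P x.
Proof. by rewrite -sum1dep_card big_mkcond; apply: eq_bigr => x _; case: (P x). Qed.

Lemma exists_notin_of_sum_gt (T : finType) (S E : {set T}) (f : pred T) :
  #|E| < \sum_(w in S) f w -> exists2 w, w \in S & f w && (w \notin E).
Proof.
move=> ltEf; apply/exists_inP; apply: contraTT ltEf => /exists_inPn noE.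
rewrite -leqNgt -sum1_card (big_mkcond (mem E)) (big_mkcond (mem S)) /=.
apply: leq_sum => w _; case: ifP => // /noE; case: (f w) => //=.
by rewrite negbK => ->.
Qed.

Section DenseSubgraph.
Variables (U W : finType) (H : U -> W -> bool).

Definition nedges (P : {set U}) (Q : {set W}) := \sum_(u in P) \sum_(w in Q) H u w.

Lemma nedgesD1l u (P : {set U}) (Q : {set W}) : u \in P ->
  nedges P Q = \sum_(w in Q) H u w + nedges (P :\ u) Q.
Proof.
move=> uP; rewrite /nedges (bigD1 u uP); congr (_ + _).
by apply: eq_bigl => v; rewrite !inE andbC.
Qed.

Lemma nedgesD1r w (P : {set U}) (Q : {set W}) : w \in Q ->
  nedges P Q = \sum_(u in P) H u w + nedges P (Q :\ w).
Proof.
move=> wQ; rewrite /nedges exchange_big (bigD1 w wQ) [in RHS]exchange_big /=.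
by congr (_ + _); apply: eq_bigl => v; rewrite !inE andbC.
Qed.

Lemma dense_subgraph K (P : {set U}) (Q : {set W}) : K * (#|P| + #|Q|) < nedges P Q ->
  exists (P' : {set U}) (Q' : {set W}), [/\ P' \subset P, Q' \subset Q, P' != set0,
     forall u, u \in P' -> (K < \sum_(w in Q') H u w) &
     forall w, w \in Q' -> (K < \sum_(u in P') H u w)].
Proof.
have [n] := ubnP (#|P| + #|Q|); elim: n P Q => // n IH P Q ltPQn dense.
case: (boolP [exists u in P, \sum_(w in Q) H u w <= K]) => [/exists_inP [u uP lowu] | lowP].
  have ltPQ' : #|P :\ u| + #|Q| < n by move: ltPQn; rewrite (cardsD1 u P) uP; lia.
  have dense' : K * (#|P :\ u| + #|Q|) < nedges (P :\ u) Q.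
    by move: dense; rewrite (nedgesD1l _ uP) (cardsD1 u P) uP; lia.
  have [P' [Q' [sP sQ]]] := IH _ _ ltPQ' dense'.
  by exists P', Q'; split=> //; apply: subset_trans sP (subsetDl _ _).
case: (boolP [exists w in Q, \sum_(u in P) H u w <= K]) => [/exists_inP [w wQ loww] | lowQ].
  have ltPQ' : #|P| + #|Q :\ w| < n by move: ltPQn; rewrite (cardsD1 w Q) wQ; lia.
  have dense' : K * (#|P| + #|Q :\ w|) < nedges P (Q :\ w).
    by move: dense; rewrite (nedgesD1r _ wQ) (cardsD1 w Q) wQ; lia.
  have [P' [Q' [sP sQ]]] := IH _ _ ltPQ' dense'.
  by exists P', Q'; split=> //; apply: subset_trans sQ (subsetDl _ _).
exists P, Q; split=> //.
- by apply: contraTneq dense => ->; rewrite /nedges big_set0.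
- by move=> u uP; rewrite ltnNge; apply: contra lowP => lowu; apply/exists_inP; exists u.
- by move=> w wQ; rewrite ltnNge; apply: contra lowQ => loww; apply/exists_inP; exists w.
Qed.

End DenseSubgraph.

Lemma image_card_le (T : finType) (f : nat -> T) j : #|[set f (val i) | i : 'I_j]| <= j.
Proof. by rewrite -[leqRHS]card_ord leq_imset_card. Qed.

Lemma image_mem (T : finType) (f : nat -> T) j i : i < j -> f i \in [set f (val i) | i : 'I_j].
Proof. by move=> lt_ij; apply/imsetP; exists (Ordinal lt_ij). Qed.

Lemma injective_extend (T : eqType) (f : nat -> T) j v :
  {in gtn j &, injective f} -> (forall i, i < j -> f i != v) ->
  {in gtn j.+1 &, injective (fun i => if i == j then v else f i)}.
Proof.
move=> injf fv i1 i2; rewrite !unfold_in /= !ltnS => le1 le2.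
case: eqVneq => [->|n1]; case: eqVneq => [->|n2] //.
- by move/esym/eqP; rewrite (negbTE (fv _ _)) //; lia.
- by move/eqP; rewrite (negbTE (fv _ _)) //; lia.
- by apply: injf; rewrite unfold_in /=; lia.
Qed.

Section GreedyCycle.
Variables (N k t : nat) (c : bcoloring N k) (a : 'I_k.+1) (x : 'I_N) (P Q : {set 'I_N}).
Hypotheses (xP : forall y, y \in P -> c x y = a) (P0 : P != set0)
  (degP : forall y, y \in P -> (t < \sum_(w in Q) (c w y == a)))
  (degQ : forall w, w \in Q -> (t < \sum_(y in P) (c w y == a))).

Definition greedy_path j (X Y : nat -> 'I_N) :=
  [/\ X 0 = x,
      forall i, i < j -> Y i \in P /\ c (X i) (Y i) = a,
      forall i, i.+1 < j -> c (X i.+1) (Y i) = a,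
      {in gtn j &, injective X} & {in gtn j &, injective Y}].

Lemma greedy_path1 : exists X Y, greedy_path 1 X Y.
Proof.
have [y0 y0P] := set0Pn _ P0.
exists (fun _ => x), (fun _ => y0); split=> // [i|i1 i2|i1 i2]; rewrite ?unfold_in /=.
- by rewrite ltnS leqn0 => _; split=> //; apply: xP.
- by rewrite !ltnS !leqn0 => /eqP-> /eqP->.
- by rewrite !ltnS !leqn0 => /eqP-> /eqP->.
Qed.

Lemma greedy_path_ext j X Y : j < t -> greedy_path j.+1 X Y ->
  exists X' Y', greedy_path j.+2 X' Y'.
Proof.
move=> ltjt [X0 XY YX injX injY].
have [YjP _] := XY j (ltnSn j).
have [xn xnQ /andP [/eqP cxn xnX]] := exists_notin_of_sum_gt (f := fun w => c w (Y j) == a)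
  (leq_ltn_trans (leq_trans (image_card_le X j.+1) ltjt) (degP YjP)).
have [yn ynP /andP [/eqP cyn ynY]] := exists_notin_of_sum_gt (f := fun y => c xn y == a)
  (leq_ltn_trans (leq_trans (image_card_le Y j.+1) ltjt) (degQ xnQ)).
have fresh (f : nat -> 'I_N) v :
    v \notin [set f (val i) | i : 'I_j.+1] -> forall i, i < j.+1 -> f i != v.
  by move=> fv i lt_ij; apply: contraNneq fv => <-; apply: image_mem.
exists (fun i => if i == j.+1 then xn else X i), (fun i => if i == j.+1 then yn else Y i).
split=> /=; [done | move=> i lt_ij | move=> i lt_ij | |].
- by case: eqVneq => [_|ne]; [split | apply: XY; lia].
- case: (eqVneq i j) => [->|ne]; first by rewrite eqxx ltn_eqF.
  by rewrite !ifN_eq ?eqSS //; [apply: YX; lia | lia].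
- exact: injective_extend injX (fresh _ _ xnX).
- exact: injective_extend injY (fresh _ _ ynY).
Qed.

Lemma greedy_path_exists j : 0 < j -> j <= t -> exists X Y, greedy_path j X Y.
Proof.
case: j => // j _; elim: j => [|j IH] le_jt; first exact: greedy_path1.
have [X [Y path]] := IH (ltnW le_jt).
exact: greedy_path_ext (ltnW le_jt) path.
Qed.

Lemma mono_cycle_of_min_degree : 0 < t -> mono_cycle t c a.
Proof.
move=> t0; have [X [Y [X0 XY YX injX injY]]] := greedy_path_exists t0 (leqnn t).
exists (fun i : 'I_t => X i), (fun i : 'I_t => Y i); split; last split.
- by move=> i1 i2 /(injX _ _ (ltn_ord i1) (ltn_ord i2)) /val_inj.
- by move=> i1 i2 /(injY _ _ (ltn_ord i1) (ltn_ord i2)) /val_inj.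
move=> i; have [YiP ->] := XY _ (ltn_ord i); split=> //=.
case: (ltnP i.+1 t) => [lt_it|le_ti]; first by rewrite modn_small ?YX.
have -> : i.+1 %% t = 0 by rewrite (_ : i.+1 = t) ?modnn //; have := ltn_ord i; lia.
by rewrite X0 xP.
Qed.
End GreedyCycle.

Lemma sqr_sum_le (T : finType) (f : T -> nat) :
  (\sum_i f i) ^ 2 <= #|T| * \sum_i f i ^ 2.
Proof.
rewrite -(leq_pmul2l (isT : 0 < 2)) expnS expn1 big_distrlr /= big_distrr /=.
apply: (@leq_trans (\sum_i \sum_j (f i ^ 2 + f j ^ 2))).
  apply: leq_sum => i _; rewrite big_distrr /=; apply: leq_sum => j _.
  exact: (nat_Cauchy _ _).1.
rewrite (eq_bigr (fun i => #|T| * f i ^ 2 + \sum_j f j ^ 2)) => [|i _]; last first.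
  by rewrite big_split sum_nat_const.
rewrite big_split /= sum_nat_const -big_distrr /= (_ : #|xpredT| = #|T|) //; lia.
Qed.

Lemma leq_add_of_sqr_le (e a b : nat) : e ^ 2 <= a * e + b ^ 2 -> e <= a + b.
Proof. by move=> le; rewrite leqNgt; apply/negP => lt; nia. Qed.

Section ColorClass.
Variables (N k : nat) (c : bcoloring N k) (a : 'I_k.+1).

Definition ncolor := \sum_x \sum_y (c x y == a).

Definition rdeg y := \sum_x (c x y == a).

Lemma ncolor_rdeg : ncolor = \sum_y rdeg y.
Proof. exact: exchange_big. Qed.

Lemma sum_cherries :
  (\sum_x \sum_(y | c x y == a) rdeg y = \sum_y rdeg y ^ 2).
Proof.
under eq_bigr do rewrite big_mkcond /=.
rewrite exchange_big; apply: eq_bigr => y _.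
rewrite -mulnn [X in (X * _)]/rdeg big_distrl; apply: eq_bigr => x _.
by case: (c x y == a) => /=; rewrite ?mul1n ?mul0n.
Qed.

(* The second side contains x itself: the greedy path is injective, so it never
   returns to x. *)
Lemma cherries_le t x : 0 < t -> ~ mono_cycle t c a ->
  (\sum_(y | c x y == a) rdeg y <= t * (#|[set y | c x y == a]| + N)).
Proof.
move=> t0 nocycle; rewrite leqNgt; apply/negP => dense.
pose H y w := c w y == a.
have [|P [Q [sP _ P0 degP degQ]]] := @dense_subgraph _ _ H t [set y | c x y == a] setT.
  rewrite cardsT card_ord /nedges big_set /=; apply: leq_trans dense _.
  by apply: eq_leq; apply: eq_bigr => y _; apply: eq_bigl => w; rewrite in_setT.
apply: nocycle; apply: (mono_cycle_of_min_degree (x := x)) degP degQ t0 => //.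
by move=> y /(subsetP sP); rewrite inE => /eqP.
Qed.

Lemma ncolor_sqr_le t : 0 < t -> ~ mono_cycle t c a ->
  (ncolor ^ 2 <= t * N * ncolor + t * N ^ 3).
Proof.
move=> t0 nocycle.
have cs := sqr_sum_le rdeg; rewrite card_ord -ncolor_rdeg -sum_cherries in cs.
have cherries : \sum_x \sum_(y | c x y == a) rdeg y <= t * (ncolor + N * N).
  apply: (@leq_trans (\sum_x t * (#|[set y | c x y == a]| + N))).
    by apply: leq_sum => x _; apply: cherries_le.
  rewrite -big_distrr big_split /= sum_nat_const card_ord.
  by under eq_bigr do rewrite card_set_sum.
apply: leq_trans cs (leq_trans (leq_mul (leqnn N) cherries) (eq_leq _)); ring.
Qed.

Lemma ncolor_le t s : 0 < t -> ~ mono_cycle t c a -> N = s ^ 2 ->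
  (ncolor <= 2 * t * s ^ 3).
Proof.
move=> t0 nocycle Ns; have := ncolor_sqr_le t0 nocycle; rewrite Ns => le.
apply: (@leq_trans (t * s ^ 2 + t * s ^ 3)); last by nia.
apply: leq_add_of_sqr_le; apply: leq_trans le _; nia.
Qed.

End ColorClass.

Lemma sum_other_colors N k (c : bcoloring N k) :
  (\sum_x \sum_y (c x y != ord_max) = \sum_(a | a != ord_max) ncolor c a).
Proof.
rewrite /ncolor [RHS]exchange_big; apply: eq_bigr => x _.
rewrite [RHS]exchange_big; apply: eq_bigr => y _.
have [->|ne] := eqVneq (c x y) ord_max; first by rewrite big1 // => a; rewrite eq_sym => /negbTE->.
by rewrite (bigD1 (c x y)) //= eqxx big1 // => a /andP [_]; rewrite eq_sym => /negbTE->.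
Qed.

Lemma exists_le_of_sum_ge (I : finType) (A : {pred I}) (f : I -> nat) n :
  0 < #|A| -> n * #|A| <= \sum_(i in A) f i -> exists2 i, i \in A & n <= f i.
Proof.
move=> A0 le; apply/exists_inP; apply: contraTT le => /exists_inPn small.
have [i Ai] := card_gt0P A0; have := small i Ai; rewrite -ltnNge => lt_fn.
have : \sum_(i in A) f i <= \sum_(i in A) n.-1.
  by apply: leq_sum => j Aj; have := small j Aj; lia.
rewrite sum_nat_const -ltnNge; nia.
Qed.

Lemma ffact_mul_le N n D : n + D <= N -> forall j, j <= n ->
  ((N - n - D) ^ j * N ^_ j <= (N - D) ^_ j * (N - n) ^ j).
Proof.
move=> nDN; elim=> [|j IH] le_jn; first by rewrite !expn0 !ffactn0.
rewrite !ffactnSr !expnS.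
have step : (N - n - D) * (N - j) <= (N - D - j) * (N - n).
  have [r ->] : exists r, N = (n + D + r) by exists (N - n - D); lia.
  have [u ->] : exists u, n = (j + u.+1) by exists (n - j.+1); lia.
  nia.
have := IH (ltnW le_jn).
move: ((N - n - D) ^ j) (N ^_ j) ((N - D) ^_ j) ((N - n) ^ j) => p q r s IHj.
by apply: leq_trans (eq_leq _) (leq_trans (leq_mul IHj step) (eq_leq _)); ring.
Qed.

Lemma bin_ratio_le N n D g : n + D < N -> N <= 2 * g ->
  2 * n * (N - n) ^ n <= N * (N - n - D) ^ n ->
  (n * 'C(N, n) <= g * 'C(N - D, n)).
Proof.
move=> nDN Ng ratio.
have pos : 0 < n`! * (N - n) ^ n by rewrite muln_gt0 fact_gt0 expn_gt0 subn_gt0; lia.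
rewrite -(leq_pmul2r pos) !mulnA -![(_ * 'C(_, _) * _)]mulnA !bin_ffact.
apply: (@leq_trans (g * ((N - n - D) ^ n * N ^_ n))); last first.
  by rewrite -mulnA leq_mul2l ffact_mul_le ?orbT //; lia.
rewrite mulnAC mulnA leq_mul2r; apply/orP; right.
rewrite -(leq_pmul2l (isT : 0 < 2)) mulnA; apply: leq_trans ratio _.
by rewrite mulnA leq_mul2r Ng orbT.
Qed.

Section CompleteBipartite.
Variables (T : finType) (adj : T -> T -> bool).

Definition nbhd x := [set y | adj x y].

Lemma card_nbhd x : (#|nbhd x| + \sum_y ~~ adj x y) = #|T|.
Proof.
rewrite card_set_sum -big_split /= -sum1_card.
by apply: eq_bigr => y _; case: (adj x y).
Qed.

Lemma card_sparse_rows D : 2 * \sum_x \sum_y ~~ adj x y <= #|T| * D.+1 ->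
  (#|T| <= 2 * #|[set x | \sum_y ~~ adj x y <= D]|).
Proof.
move=> sparse; set good := [set x | _].
have bad : #|~: good| * D.+1 <= \sum_x \sum_y ~~ adj x y.
  rewrite -sum_nat_const; apply: (@leq_trans (\sum_(x in ~: good) \sum_y ~~ adj x y)).
    by apply: leq_sum => x; rewrite !inE -ltnNge.
  by rewrite [leqRHS](bigID (mem (~: good))) leq_addr.
have : 2 * #|~: good| <= #|T|.
  by rewrite -(leq_pmul2r (ltn0Sn D)) -mulnA; apply: leq_trans sparse; rewrite leq_mul2l bad orbT.
by have := cardsC good; lia.
Qed.

Lemma sum_bin_nbhd n : \sum_x 'C(#|nbhd x|, n) =
  \sum_(B : {set T} | #|B| == n) #|[set x | B \subset nbhd x]|.
Proof.
under eq_bigr do rewrite -cards_draws card_set_sum.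
rewrite exchange_big [RHS]big_mkcond /=; apply: eq_bigr => B _.
rewrite card_set_sum; case: (#|B| == n); [apply: eq_bigr | apply: big1] => x _.
  by rewrite andbT.
by rewrite andbF.
Qed.

Lemma complete_bipartite_of_sparse n D : 0 < n -> n + D < #|T| ->
  2 * \sum_x \sum_y ~~ adj x y <= #|T| * D.+1 ->
  2 * n * (#|T| - n) ^ n <= #|T| * (#|T| - n - D) ^ n ->
  exists A B : {set T}, [/\ #|A| = n, #|B| = n & forall x y, x \in A -> y \in B -> adj x y].
Proof.
move=> n0 nDT sparse ratio; set good := [set x | (\sum_y ~~ adj x y <= D)].
set draws := [set B : {set T} | #|B| == n].
have count : n * #|draws| <= \sum_(B in draws) #|[set x | B \subset nbhd x]|.
  rewrite big_set card_draws -sum_bin_nbhd.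
  apply: leq_trans (bin_ratio_le nDT (card_sparse_rows sparse) ratio) _.
  apply: (@leq_trans (\sum_(x in good) 'C(#|nbhd x|, n))).
    rewrite -sum_nat_const; apply: leq_sum => x; rewrite inE => few; apply: leq_bin2l.
    by have := card_nbhd x; lia.
  by rewrite [leqRHS](bigID (mem good)) leq_addr.
have [|B] := exists_le_of_sum_ge _ count; first by rewrite card_draws bin_gt0; lia.
rewrite inE => /eqP cardB bigB.
have /card_gt0P [A] : 0 < #|[set A : {set T} | A \subset [set x | B \subset nbhd x] & #|A| == n]|.
  by rewrite cards_draws bin_gt0.
rewrite inE => /andP [sA /eqP cardA]; exists A, B; split=> // x y xA yB.
by have := subsetP sA x xA; rewrite inE => /subsetP /(_ y yB); rewrite inE.
Qed.
End CompleteBipartite.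

Lemma br_arrows_sqr k t n s : 0 < t -> 0 < n ->
  n + 4 * k * t * s < s ^ 2 ->
  2 * n * (s ^ 2 - n) ^ n <= s ^ 2 * (s ^ 2 - n - 4 * k * t * s) ^ n ->
  br_arrows k t n (s ^ 2).
Proof.
move=> t0 n0 small ratio c.
have [cyc|nocyc] := boolp.pselect (exists a : 'I_k.+1, (a < k) /\ mono_cycle t c a).
  by left.
have few : 2 * \sum_x \sum_y (c x y != ord_max) <= s ^ 2 * (4 * k * t * s).+1.
  rewrite sum_other_colors; apply: (@leq_trans (2 * (k * (2 * t * s ^ 3)))); last by nia.
  rewrite leq_mul2l /=; apply: (@leq_trans (\sum_(a : 'I_k.+1 | a != ord_max) 2 * t * s ^ 3)).
    apply: leq_sum => a ne; apply: ncolor_le t0 _ erefl => cyc; apply: nocyc; exists a.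
    split=> //; rewrite ltn_neqAle -ltnS ltn_ord andbT; apply: contra ne => /eqP ak.
    by apply/eqP/val_inj.
  by rewrite sum_nat_const cardC1 card_ord.
have := @complete_bipartite_of_sparse _ (fun x y => c x y == ord_max) n (4 * k * t * s) n0.
rewrite card_ord => /(_ small few ratio) [A [B [cA cB AB]]].
by right; exists A, B; do 2!split=> //; move=> x y xA yB; apply/eqP/AB.
Qed.

Local Open Scope ring_scope.

Section RealEstimates.
Variable R : realType.
Implicit Types (x z : R).

Lemma sqr_le_expR x : 0 <= x -> x ^+ 2 / 4 <= expR x.
Proof.
move=> x0; rewrite (_ : expR x = expR (x / 2) * expR (x / 2)) ?expr2; last first.
  by rewrite -expRD; congr expR; field.
have h : x / 2 <= expR (x / 2) by have := expR_ge1Dx (x / 2); lra.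
rewrite (_ : x * x / 4 = (x / 2) * (x / 2)); last by field.
by apply: ler_pM => //; lra.
Qed.

Lemma expR_le_one_sub z : 0 <= z <= 1 / 2 -> expR (- (2 * z)) <= 1 - z.
Proof.
move=> /andP [z0 z1]; rewrite expRN -div1r ler_pdivrMr ?expR_gt0 //.
have := expR_ge1Dx (2 * z) => e; apply: le_trans (_ : (1 - z) * (1 + 2 * z) <= _).
  by nra.
by rewrite ler_wpM2l //; lra.
Qed.

Lemma expR_le_one_sub_pow z n : 0 <= z <= 1 / 2 -> expR (- (2 * z * n%:R)) <= (1 - z) ^+ n.
Proof.
move=> z01; rewrite -mulNr expRM_natr; apply: lerXn2r; rewrite ?nnegrE ?expR_ge0 //.
  by case/andP: z01 => _; lra.
exact: expR_le_one_sub.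
Qed.

(* With z = g x / (x^2 - n): (1 - z)^n >= exp (-2 z n) >= n^(-1/2), while
   x^2 >= 4 n^(3/2). *)
Lemma side_length_conditions_real (g n : nat) x : (1 <= g)%N -> (3 <= n)%N ->
  8 * g%:R * n%:R <= x * ln n%:R ->
  n%:R + g%:R * x < x ^+ 2 /\
  2 * n%:R * (x ^+ 2 - n%:R) ^+ n <= x ^+ 2 * (x ^+ 2 - n%:R - g%:R * x) ^+ n.
Proof.
move=> g1 n3; set m : R := n%:R; set L := ln m; set gr : R := g%:R => hx.
have m3 : 3 <= m by rewrite /m (ler_nat R 3 n).
have g1r : 1 <= gr by rewrite /gr (ler_nat R 1 g).
have L0 : 0 < L by apply: ln_gt0; lra.
have Lm : L < m by apply: ln_sublinear; lra.
have eL : expR L = m by rewrite /L lnK // posrE; lra.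
set E := expR (L / 2).
have E0 : 0 < E := expR_gt0 _.
have EE : E * E = m by rewrite -expRD -eL; congr expR; field.
have LE : L ^+ 2 <= 16 * E.
  by have := sqr_le_expR (ltW (divr_gt0 L0 (ltr0Sn _ 1))); rewrite -/E; lra.
have Lm4 : L ^+ 2 <= 4 * m by have := sqr_le_expR (ltW L0); rewrite eL; lra.
have x0 : 0 < x by rewrite -(pmulr_lgt0 x L0); nra.
have sq : (8 * m) * (8 * m) <= (x * L) * (x * L) by apply: ler_pM; nra.
have x2m : 16 * m <= x ^+ 2.
  by have := ler_wpM2l (sqr_ge0 x) Lm4; nra.
have x2E : 4 * E ^+ 3 <= x ^+ 2.
  have := ler_wpM2l (sqr_ge0 x) LE; rewrite -EE in sq; nra.
set M := x ^+ 2 - m.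
have M0 : 0 < M by rewrite /M; lra.
set z := gr * x / M.
have zM : z * M = gr * x by rewrite /z divfK // gt_eqF.
have z0 : 0 <= z by rewrite /z divr_ge0 //; nra.
have zm : z * m <= L / 4.
  by rewrite -(ler_pM2r M0) mulrAC zM /M; nra.
have z4 : z <= 1 / 4 by nra.
have hM : M - gr * x = M * (1 - z) by rewrite -zM; ring.
split; first by have := mulr_gt0 M0 (_ : 0 < 1 - z); rewrite -hM /M; lra.
have pow : E^-1 <= (1 - z) ^+ n.
  rewrite -expRN; apply: le_trans (expR_le_one_sub_pow n _); last lra.
  by rewrite ler_expR; lra.
have key : 2 * m <= x ^+ 2 * (1 - z) ^+ n.
  apply: le_trans (ler_wpM2l (sqr_ge0 x) pow).
  by rewrite -/(_ / E) ler_pdivlMr // -EE; nra.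
rewrite hM exprMn [M ^+ n * _]mulrC mulrA ler_wpM2r //.
by rewrite exprn_ge0 // ltW.
Qed.

Lemma side_length_conditions (g n s : nat) : (1 <= g)%N -> (3 <= n)%N ->
  8 * g%:R * n%:R <= s%:R * ln (n%:R : R) ->
  (n + g * s < s ^ 2)%N /\ (2 * n * (s ^ 2 - n) ^ n <= s ^ 2 * (s ^ 2 - n - g * s) ^ n)%N.
Proof.
move=> g1 n3 hs; have [small ratio] := side_length_conditions_real g1 n3 hs.
have small' : (n + g * s < s ^ 2)%N by rewrite -(ltr_nat R) natrD natrM natrX.
split=> //; rewrite -(ler_nat R) !natrM !natrX !natrB ?natrM ?natrX //; lia.
Qed.

Lemma side_length_exists (g n : nat) : (1 <= g)%N -> (3 <= n)%N ->
  exists s : nat, 8 * g%:R * n%:R <= s%:R * ln (n%:R : R) /\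
    (s ^ 2)%:R <= (16 * g)%:R ^+ 2 * n%:R ^+ 2 / ln (n%:R : R) ^+ 2.
Proof.
move=> g1 n3; set m : R := n%:R; set L := ln m.
have m3 : 3 <= m by rewrite /m (ler_nat R 3 n).
have L0 : 0 < L by apply: ln_gt0; lra.
have Lm : L < m by apply: ln_sublinear; lra.
set w := (16 * g)%:R * m / L.
have wL : w * L = (16 * g)%:R * m by rewrite /w divfK // gt_eqF.
have w16 : (16 * g)%:R <= w by rewrite -(ler_pM2r L0) wL ler_wpM2l //; lra.
have /andP [sw ws] := truncn_itv (le_trans (ler0n _ _) w16).
exists (Num.truncn w); split.
  have g1r : 1 <= (g%:R : R) by rewrite (ler_nat R 1 g).
  by move: w16 ws; rewrite natrM -natr1 => w16 ws; nra.
rewrite natrX (_ : _ / _ = w ^+ 2); last by rewrite /w expr_div_n exprMn.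
by rewrite !expr2 ler_pM // ler0n.
Qed.
End RealEstimates.

Theorem theorem2 (R : realType) (t k : nat) :
  (2 <= t)%N -> (2 <= k)%N ->
  exists c : R, 0 < c /\
    exists n0 : nat, forall n : nat, (n0 <= n)%N ->
      exists N : nat, br_arrows k t n N /\
        (N%:R : R) <= c * (n%:R ^+ 2) / (ln (n%:R : R) ^+ 2).
Proof.
move=> t2 k2; set g := (4 * k * t)%N; have g1 : (1 <= g)%N by rewrite /g; lia.
exists ((16 * g)%:R ^+ 2); split; first by rewrite exprn_gt0 // ltr0n; lia.
exists 3%N => n n3.
have [s [hs sN]] := side_length_exists R g1 n3.
have [small ratio] := side_length_conditions g1 n3 hs.
by exists (s ^ 2)%N; split=> //; apply: br_arrows_sqr => //; lia.
Qed.
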